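(* Let $s\ge1$ be an integer and $f,g$ formal power series. Then \[ \zeta_s\odot(f*g)=\sum_{\substack{a+c=s\\ a,c\ge0}}(\zeta_a\odot f)*(\zeta_c\odot g)\;-\;\Big(\sum_{\substack{a+c=s-1\\ a,c\ge0}}(\zeta_a\odot f)*(\zeta_c\odot g)\Big)*\zeta_1 . \]
   Context: For an integer $j\ge0$, $\zeta_j(x)=\frac{x^j}{(1-x)^{j+1}}=\sum_{n\ge0}\binom{n}{j}x^n$. For formal power series $f,g$, $f*g:=f(x)\,(1-x)\,g(x)$ (Cauchy product), and the Hadamard product is $\left(\sum_n a_nx^n\right)\odot\left(\sum_n b_nx^n\right)=\sum_n a_nb_nx^n$. *)

From mathcomp Require Import all_boot all_algebra.
Set Implicit Arguments. Unset Strict Implicit. Unset Printing Implicit Defensive.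
Import GRing.Theory.
Local Open Scope ring_scope.

Definition fps (R : comRingType) := nat -> R.

Definition fps_mul (R : comRingType) (f g : fps R) : fps R :=
  fun n => \sum_(i < n.+1) f i * g (n - i)%N.

Definition one_minus_x (R : comRingType) : fps R :=
  fun n => if n == 0%N then 1 else if n == 1%N then -1 else 0.

Definition fps_star (R : comRingType) (f g : fps R) : fps R :=
  fps_mul f (fps_mul (@one_minus_x R) g).

Definition hadamard (R : comRingType) (f g : fps R) : fps R :=
  fun n => f n * g n.

(* zeta_j(x) = x^j/(1-x)^{j+1} = sum_n binom(n,j) x^n *)
Definition zeta (R : comRingType) (j : nat) : fps R :=
  fun n => ('C(n, j))%:R.

From mathcomp Require Import all_boot all_algebra.
From mathcomp Require Import ring.
From Stdlib Require Import FunctionalExtensionality.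
Import GRing.Theory.
Set Implicit Arguments.
Local Open Scope ring_scope.

(* Since (1 - x)·g = g - x·g, the
   product f * g = f(1 - x)g equals P - x·P with P = fg.  Vandermonde's
   identity C(n,s) = sum_{a+c=s} C(i,a) C(n-i,c) gives
   zeta_s ⊙ (fg) = sum_{a+c=s} (zeta_a ⊙ f)(zeta_c ⊙ g), hence
     sum_{a+c=s} (zeta_a ⊙ f) * (zeta_c ⊙ g) = Q_s - x·Q_s,
   where Q_s = zeta_s ⊙ P.  As (1 - x) zeta_1 = x/(1 - x), the series
   u * zeta_1 is the sequence of partial sums of x·u, and the partial sums of Q_{s-1} - x·Q_{s-1}
   telescope to x·Q_{s-1}.  At index n the theorem thus reduces to
     C(n,s)(P_n - P_{n-1}) = C(n,s) P_n - C(n-1,s) P_{n-1} - C(n-1,s-1) P_{n-1},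
   which is Pascal's rule. *)

Definition shift (R : comRingType) (u : fps R) : fps R :=
  fun n => if n is m.+1 then u m else 0.

Lemma shift_sum (R : comRingType) (I : finType) (F : I -> fps R) n :
  \sum_(a : I) shift (F a) n = shift (fun m => \sum_(a : I) F a m) n.
Proof. by case: n => [|n] /=; [rewrite big1 | ]. Qed.

Lemma mul_one_minus_x (R : comRingType) (g : fps R) n :
  fps_mul (@one_minus_x R) g n = g n - shift g n.
Proof.
rewrite /fps_mul /one_minus_x; case: n => [|n].
  by rewrite big_ord1 /= mul1r subr0.
rewrite 2!big_ord_recl big1 => [|i _]; last by rewrite /= mul0r.
by rewrite /= mul1r mulN1r subn0 subn1 addr0.
Qed.

Lemma fps_mul_shiftr (R : comRingType) (f g : fps R) n :
  fps_mul f (shift g) n = shift (fps_mul f g) n.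
Proof.
rewrite /fps_mul; case: n => [|n]; first by rewrite big_ord1 /= mulr0.
rewrite big_ord_recr /= subnn mulr0 addr0.
by apply: eq_bigr => i _; rewrite subSn ?leq_ord.
Qed.

Lemma fps_star_diff (R : comRingType) (f g : fps R) n :
  fps_star f g n = fps_mul f g n - shift (fps_mul f g) n.
Proof.
rewrite /fps_star -fps_mul_shiftr [LHS]/fps_mul.
under eq_bigr => i _ do rewrite mul_one_minus_x mulrBr.
by rewrite sumrB.
Qed.

(* u * zeta_1 is the series of partial sums of u, since (1 - x) zeta_1 = x/(1 - x). *)
Lemma fps_star_zeta1 (R : comRingType) (u : fps R) n :
  fps_star u (zeta R 1) n = \sum_(i < n) u i.
Proof.
have one_minus_x_zeta1 m : fps_mul (@one_minus_x R) (zeta R 1) m = (0 < m)%:R.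
  rewrite mul_one_minus_x /zeta; case: m => [|m] /=; first by rewrite bin0n subrr.
  by rewrite !bin1 -natr1 addrAC subrr add0r.
rewrite /fps_star {1}/fps_mul; case: n => [|n].
  by rewrite big_ord1 big_ord0 one_minus_x_zeta1 mulr0.
rewrite big_ord_recr /= one_minus_x_zeta1 subnn mulr0 addr0.
by apply: eq_bigr => i _; rewrite one_minus_x_zeta1 subn_gt0 ltn_ord mulr1.
Qed.

Lemma telescope_shift (R : comRingType) (A : fps R) n :
  \sum_(i < n) (A i - shift A i) = shift A n.
Proof.
elim: n => [|n IH]; first by rewrite big_ord0.
rewrite big_ord_recr IH /=; case: n {IH} => [|n] /=; first by rewrite subr0 add0r.
by rewrite addrC subrK.
Qed.

Lemma hadamard_zeta_mul (R : comRingType) (s : nat) (f g : fps R) n :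
  hadamard (zeta R s) (fps_mul f g) n =
  \sum_(a < s.+1) fps_mul (hadamard (zeta R a) f) (hadamard (zeta R (s - a)%N) g) n.
Proof.
rewrite /hadamard /fps_mul exchange_big big_distrr /=.
apply: eq_bigr => i _.
have vandermonde : zeta R s n = \sum_(a < s.+1) zeta R a i * zeta R (s - a)%N (n - i)%N.
  rewrite /zeta -{1}(subnKC (leq_ord i)) -binomial.Vandermonde natr_sum.
  by apply: eq_bigr => a _; rewrite natrM.
by rewrite vandermonde mulr_suml; apply: eq_bigr => a _; ring.
Qed.

Lemma sum_fps_star_zeta (R : comRingType) (s : nat) (f g : fps R) n :
  let Q := hadamard (zeta R s) (fps_mul f g) in
  \sum_(a < s.+1) fps_star (hadamard (zeta R a) f) (hadamard (zeta R (s - a)%N) g) n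
  = Q n - shift Q n.
Proof.
have hadamard_zeta_mulE : hadamard (zeta R s) (fps_mul f g) =
    fun m => \sum_(a < s.+1)
      fps_mul (hadamard (zeta R a) f) (hadamard (zeta R (s - a)%N) g) m.
  by apply: functional_extensionality => m; rewrite hadamard_zeta_mul.
rewrite /= hadamard_zeta_mulE -shift_sum -sumrB.
by apply: eq_bigr => a _; rewrite fps_star_diff.
Qed.

Theorem lemma2p7 (R : comRingType) (s : nat) (hs : (1 <= s)%N) (f g : fps R) :
  hadamard (zeta R s) (fps_star f g) =
  (fun n =>
     \sum_(a < s.+1) fps_star (hadamard (zeta R a) f)
                              (hadamard (zeta R (s - a)%N) g) n
     - fps_star (fun m => \sum_(a < s) fps_star (hadamard (zeta R a) f)
                                  (hadamard (zeta R (s.-1 - a)%N) g) m)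
                (zeta R 1) n).
Proof.
case: s hs => // t _; apply: functional_extensionality => n.
rewrite fps_star_zeta1 sum_fps_star_zeta /=.
under eq_bigr => i _ do rewrite sum_fps_star_zeta.
rewrite telescope_shift /hadamard fps_star_diff.
case: n => [|n] /=; first by rewrite /zeta bin0n !mul0r !subr0.
by rewrite /zeta binS natrD; ring.
Qed.
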